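(* With $A_1[n]$ defined below, for $n=1,2,\dots$, $$A_1[n]=\frac{n+1}{18}\binom{3n+4}{n+1}\Bigl(F(1,-n-1;2n+4;-2)-\frac{4n+6}{3n+4}\Bigr),$$ where $F(a,b;c;z)$ is the Gauss hypergeometric function.
   Context: $A_0(z)$ is the unique function holomorphic near $z=0$ with $A_0(0)=0$ and $z(1+A_0(z))^3=A_0(z)$, and $A_1(z)=-A_0(z)\left(\frac{1+A_0(z)}{1-2A_0(z)}\right)^4$. The numbers $A_1[n]$ are defined by $A_1(z)=-\sum_{n\ge1}A_1[n]z^n$. *)

From mathcomp Require Import all_boot all_order all_algebra.
Set Implicit Arguments. Unset Strict Implicit. Unset Printing Implicit Defensive.
Import Order.TTheory GRing.Theory Num.Theory.
Local Open Scope ring_scope.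

Definition fps := nat -> rat.

Definition fone : fps := fun n => (n == 0)%N%:R.
Definition fX : fps := fun n => (n == 1)%N%:R.
Definition fmul (f g : fps) : fps :=
  fun n => \sum_(i < n.+1) f i * g (n - i)%N.
Definition fexp (f : fps) (k : nat) : fps := iter k (fmul f) fone.

Definition poch (x : rat) (k : nat) : rat := \prod_(i < k) (x + i%:R).

(* Gauss hypergeometric function F(a, -m; c; z) with second upper parameter
   a nonpositive integer -m, for which the series terminates (terms with
   k > m vanish since (-m)_k = 0). *)
Definition hyp2F1_term (a : rat) (m : nat) (c z : rat) : rat :=
  \sum_(k < m.+1) poch a k * poch (- m%:R) k / (poch c k * k`!%:R) * z ^+ k.

From HB Require Import structures.
From mathcomp Require Import all_boot all_order all_algebra.
From mathcomp Require Import boolp.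
From mathcomp Require Import ring zify.
Set Implicit Arguments. Unset Strict Implicit. Unset Printing Implicit Defensive.
Import Order.TTheory GRing.Theory Num.Theory.
Local Open Scope ring_scope.

(* Lagrange inversion for A_0 = z (1 + A_0)^3 turns coefficient extraction
   [z^n] H(A_0) into [t^n] H(t) (1 + t)^(3n - 1) (1 - 2t), which gives
   A_1[n] = [t^n] t (1 + t)^(3n + 3) / (1 - 2t)^3.  The certificate
   G = (1 + t)^(3n + 4) (1 - 3t + 8t^2) / (1 - 2t)^2, for which
   [t^(n+1)] (t G' - (n + 1) G) = 0, rewrites this as (n + 1)/18 times
   [t^(n+1)] (1 + t)^(3n + 4) / (1 - 2t) = sum_k 2^k C(3n + 4, n + 1 - k)
   minus a single binomial, and that sum is C(3n + 4, n + 1) F(1, -n-1; 2n+4; -2). *)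

Lemma reciprocal_cubic (S : comPzRingType) (u w c0 c1 c2 c3 : S) :
    u * w = 1 -> c0 * u ^+ 3 + c1 * u ^+ 2 + c2 * u + c3 = 0 ->
  c0 + c1 * w + c2 * w ^+ 2 + c3 * w ^+ 3 = 0.
Proof.
move=> uw1 cu0.
transitivity ((c0 + c1 * w + c2 * w ^+ 2 + c3 * w ^+ 3) * (u * w) ^+ 3).
  by rewrite uw1 expr1n mulr1.
transitivity (w ^+ 3 * (c0 * u ^+ 3 + c1 * u ^+ 2 * (u * w)
                        + c2 * u * (u * w) ^+ 2 + c3 * (u * w) ^+ 3)).
  by ring.
by rewrite uw1 !expr1n !mulr1 cu0 mulr0.
Qed.

Section SeriesRing.
Variable R : comNzRingType.

Record series := Series { scoef : nat -> R }.

Implicit Types (f g u : series) (c : R).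

HB.instance Definition _ := gen_eqMixin series.
HB.instance Definition _ := gen_choiceMixin series.

Lemma series_ext (f g : series) : scoef f =1 scoef g -> f = g.
Proof. by case: f; case: g => g f /= /funext ->. Qed.

Let szero := Series (fun _ => 0).
Let sopp f := Series (fun n => - scoef f n).
Let sadd f g := Series (fun n => scoef f n + scoef g n).

Let saddA : associative sadd.
Proof. by move=> f g h; apply: series_ext => n /=; rewrite addrA. Qed.
Let saddC : commutative sadd.
Proof. by move=> f g; apply: series_ext => n /=; rewrite addrC. Qed.
Let add0s : left_id szero sadd.
Proof. by move=> f; apply: series_ext => n /=; rewrite add0r. Qed.
Let addNs : left_inverse szero sopp sadd.
Proof. by move=> f; apply: series_ext => n /=; rewrite addNr. Qed.

HB.instance Definition _ := GRing.isZmodule.Build series saddA saddC add0s addNs.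

(* Associativity is inherited from {poly R}: the n-th coefficient of a
   product only depends on the truncations of the factors at degree n. *)
Definition strunc (n : nat) (f : series) : {poly R} := \poly_(i < n.+1) scoef f i.

Lemma coef_strunc n f i : (i <= n)%N -> (strunc n f)`_i = scoef f i.
Proof. by move=> le_in; rewrite coef_poly ltnS le_in. Qed.

Lemma coefM_eq (p p' q q' : {poly R}) n :
    (forall i, (i <= n)%N -> p`_i = p'`_i) ->
    (forall i, (i <= n)%N -> q`_i = q'`_i) -> (p * q)`_n = (p' * q')`_n.
Proof.
move=> Ep Eq; rewrite !coefM; apply: eq_bigr => -[j ltjn] _ /=.
by rewrite Ep -1?ltnS // Eq // leq_subr.
Qed.

Let smul f g := Series (fun n => \sum_(i < n.+1) scoef f i * scoef g (n - i)).
Let sone := Series (fun n => (n == 0)%:R).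

Let scoef_smul f g n : scoef (smul f g) n = (strunc n f * strunc n g)`_n.
Proof.
rewrite coefM; apply: eq_bigr => -[j ltjn] _ /=.
by rewrite !coef_strunc ?leq_subr // -ltnS.
Qed.

Let coef_strunc_smul f g n i :
  (i <= n)%N -> (strunc n (smul f g))`_i = (strunc n f * strunc n g)`_i.
Proof.
move=> le_in; rewrite coef_strunc // scoef_smul.
by apply: coefM_eq => k le_ki; rewrite !coef_strunc // (leq_trans le_ki).
Qed.

Let smulA : associative smul.
Proof.
move=> f g h; apply: series_ext => n; rewrite !scoef_smul.
rewrite (@coefM_eq _ (strunc n f) _ (strunc n g * strunc n h)) //; last first.
  by move=> i le_in; rewrite coef_strunc_smul.
rewrite [RHS](@coefM_eq _ (strunc n f * strunc n g) _ (strunc n h)) ?mulrA //.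
by move=> i le_in; rewrite coef_strunc_smul.
Qed.

Let smulC : commutative smul.
Proof. by move=> f g; apply: series_ext => n; rewrite !scoef_smul mulrC. Qed.

Let mul1s : left_id sone smul.
Proof.
move=> f; apply: series_ext => n; rewrite /= big_ord_recl /= mul1r subn0.
by rewrite big1 ?addr0 // => i _; rewrite mul0r.
Qed.

Let smulDl : left_distributive smul sadd.
Proof.
move=> f g h; apply: series_ext => n /=; rewrite -big_split /=.
by apply: eq_bigr => i _; rewrite mulrDl.
Qed.

Let sone_neq0 : sone != szero.
Proof. by apply/eqP => /(congr1 (scoef^~ 0%N)) /= /eqP; rewrite oner_eq0. Qed.

HB.instance Definition _ :=
  GRing.Zmodule_isComNzRing.Build series smulA smulC mul1s smulDl sone_neq0.

Lemma scoefM_strunc f g n : scoef (f * g) n = (strunc n f * strunc n g)`_n.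
Proof. exact: scoef_smul. Qed.

End SeriesRing.

Section SeriesTheory.
Variable R : comNzRingType.
Local Notation series := (series R).
Implicit Types (f g u : series) (c : R).

Lemma scoefD f g n : scoef (f + g) n = scoef f n + scoef g n. Proof. by []. Qed.
Lemma scoefN f n : scoef (- f) n = - scoef f n. Proof. by []. Qed.
Lemma scoefB f g n : scoef (f - g) n = scoef f n - scoef g n. Proof. by []. Qed.
Lemma scoef0 n : scoef (0 : series) n = 0. Proof. by []. Qed.
Lemma scoef1 n : scoef (1 : series) n = (n == 0)%:R. Proof. by []. Qed.
Lemma scoefM f g n :
  scoef (f * g) n = \sum_(i < n.+1) scoef f i * scoef g (n - i).
Proof. by []. Qed.

Lemma scoef_sum I (r : seq I) (P : pred I) (F : I -> series) n :
  scoef (\sum_(i <- r | P i) F i) n = \sum_(i <- r | P i) scoef (F i) n.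
Proof. by apply: (big_morph (fun f : series => scoef f n)). Qed.

Lemma scoefMn f k n : scoef (f *+ k) n = scoef f n *+ k.
Proof. by elim: k => [|k IHk]; rewrite ?mulr0n // !mulrS scoefD IHk. Qed.

Lemma scoef_natM k f n : scoef (k%:R * f) n = k%:R * scoef f n.
Proof. by rewrite mulr_natl scoefMn mulr_natl. Qed.

Lemma scoefM0 f g : scoef (f * g) 0 = scoef f 0 * scoef g 0.
Proof. by rewrite scoefM big_ord1. Qed.

Lemma scoefX0 f k : scoef (f ^+ k) 0 = scoef f 0 ^+ k.
Proof. by elim: k => [|k IHk]; rewrite ?expr0 // !exprS scoefM0 IHk. Qed.

Lemma scoefM_eq f f' g g' m :
    (forall i, (i <= m)%N -> scoef f i = scoef f' i) ->
    (forall i, (i <= m)%N -> scoef g i = scoef g' i) ->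
  scoef (f * g) m = scoef (f' * g') m.
Proof.
move=> Ef Eg; rewrite !scoefM; apply: eq_bigr => -[i ltim] _ /=.
by rewrite Ef -1?ltnS // Eg // leq_subr.
Qed.

Lemma rreg_scoef0 u : GRing.rreg (scoef u 0) -> GRing.rreg u.
Proof.
move=> reg_u0 d d' Edd'; apply/eqP; rewrite -subr_eq0; apply/eqP.
have : (d - d') * u = 0 by rewrite mulrBl Edd' subrr.
move: (d - d') => e eu0; apply: series_ext => n; elim/ltn_ind: n => n IHn.
apply: reg_u0; rewrite scoef0 mul0r.
have := congr1 (fun f : series => scoef f n) eu0; rewrite scoefM big_ord_recr /= subnn.
by rewrite big1 ?add0r // => i _; rewrite IHn ?mul0r.
Qed.

Definition sX : series := Series (fun n => (n == 1)%:R).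

Lemma scoefXM f n : scoef (sX * f) n = if n is n'.+1 then scoef f n' else 0.
Proof.
rewrite scoefM big_ord_recl mul0r add0r; case: n => [|n]; first by rewrite big_ord0.
rewrite big_ord_recl big1 ?addr0 => [|i _]; last by rewrite /= mul0r.
by rewrite /= mul1r subSS subn0.
Qed.

Lemma scoefXnM j f m :
  scoef (sX ^+ j * f) m = if (j <= m)%N then scoef f (m - j) else 0.
Proof.
elim: j m => [|j IHj] m; first by rewrite expr0 mul1r subn0.
by rewrite exprS -mulrA scoefXM; case: m => [|m] //; rewrite IHj ltnS subSS.
Qed.

Lemma scoef_binomial N k : scoef ((1 + sX) ^+ N) k = 'C(N, k)%:R.
Proof.
elim: N k => [|N IHN] k; first by rewrite expr0 scoef1; case: k.
rewrite exprS mulrDl mul1r scoefD scoefXM IHN.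
by case: k => [|k]; rewrite ?bin0 ?addr0 // IHN binS natrD addrC.
Qed.

Definition sbehead f := Series (fun n => scoef f n.+1).

Lemma sbeheadK f : scoef f 0 = 0 -> sX * sbehead f = f.
Proof. by move=> f0; apply: series_ext => -[|n]; rewrite scoefXM. Qed.

Lemma scoef_XMexp_lt g f j m :
  (m < j)%N -> scoef ((sX * g) ^+ j * f) m = 0.
Proof. by move=> ltmj; rewrite exprMn -mulrA scoefXnM leqNgt ltmj. Qed.

Definition scst (c : R) := Series (fun n => (n == 0)%:R * c).

Lemma scoef_scstM c f n : scoef (scst c * f) n = c * scoef f n.
Proof.
rewrite scoefM big_ord_recl /= mul1r subn0 big1 ?addr0 // => i _.
by rewrite /= !mul0r.
Qed.

Lemma scst_is_zmod_morphism : zmod_morphism scst.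
Proof. by move=> x y; apply: series_ext => n /=; rewrite mulrBr. Qed.

Lemma scst_is_monoid_morphism : monoid_morphism scst.
Proof.
split; first by apply: series_ext => n /=; rewrite mulr1.
by move=> x y; apply: series_ext => n; rewrite scoef_scstM /= mulrCA.
Qed.

HB.instance Definition _ :=
  GRing.isZmodMorphism.Build R series scst scst_is_zmod_morphism.
HB.instance Definition _ :=
  GRing.isMonoidMorphism.Build R series scst scst_is_monoid_morphism.

Definition sgeom (c : R) := Series (fun n => c ^+ n).

Lemma sgeomK c : (1 - scst c * sX) * sgeom c = 1.
Proof.
apply: series_ext => n; rewrite mulrBl mul1r scoefB -mulrA scoef_scstM scoefXM.
by case: n => [|n]; rewrite /= ?mulr0 ?subr0 // ?exprS subrr.
Qed.

Definition sderiv f := Series (fun n => scoef f n.+1 *+ n.+1).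

Lemma sderiv_is_zmod_morphism : zmod_morphism sderiv.
Proof. by move=> f g; apply: series_ext => n /=; rewrite mulrnBl. Qed.

HB.instance Definition _ :=
  GRing.isZmodMorphism.Build series series sderiv sderiv_is_zmod_morphism.

Lemma coef_deriv_strunc f n i :
  (i <= n)%N -> ((strunc n.+1 f)^`())`_i = (strunc n (sderiv f))`_i.
Proof. by move=> le_in; rewrite coef_deriv !coef_strunc. Qed.

Lemma sderivM f g : sderiv (f * g) = sderiv f * g + f * sderiv g.
Proof.
apply: series_ext => n.
have -> : scoef (sderiv (f * g)) n = ((strunc n.+1 f * strunc n.+1 g)^`())`_n.
  by rewrite coef_deriv -scoefM_strunc.
rewrite derivM coefD scoefD !scoefM_strunc.
by congr (_ + _); apply: coefM_eq => i le_in;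
  rewrite ?coef_deriv_strunc ?coef_strunc // (leq_trans le_in).
Qed.

Lemma sderiv1 : sderiv 1 = 0.
Proof. by apply: series_ext => n /=; rewrite mul0rn. Qed.

Lemma sderiv_nat k : sderiv k%:R = 0.
Proof. by apply: series_ext => n; rewrite /= scoefMn !mul0rn. Qed.

Lemma sderivX : sderiv sX = 1.
Proof. by apply: series_ext => -[|n] /=; rewrite ?mul0rn. Qed.

Lemma sderivXn f k : sderiv (f ^+ k.+1) = k.+1%:R * f ^+ k * sderiv f.
Proof.
elim: k => [|k IHk]; first by rewrite expr1 expr0 mulr1 mul1r.
by rewrite exprS sderivM IHk exprS; ring.
Qed.

Lemma sderiv_geom c : sderiv (sgeom c) = scst c * sgeom c ^+ 2.
Proof.
apply: series_ext => n; rewrite scoef_scstM expr2 scoefM /=.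
rewrite (eq_bigr (fun _ => c ^+ n)) => [|[i ltin] _]; last first.
  by rewrite /= -exprD subnKC // -ltnS.
by rewrite sumr_const card_ord exprS mulrnAr.
Qed.

Lemma sgeomN1K : (1 + sX) * sgeom (-1) = 1.
Proof. by have := sgeomK (-1); rewrite rmorphN1 mulN1r opprK. Qed.

Lemma sgeom2K : (1 - 2%:R * sX) * sgeom 2 = 1.
Proof. by have := sgeomK 2; rewrite rmorph_nat. Qed.

Lemma scoef_euler f n : scoef (sX * sderiv f) n = scoef f n *+ n.
Proof. by rewrite scoefXM; case: n => [|n]; rewrite ?mulr0n. Qed.

Section Composition.
Variable a : series.

(* Composition with a - a(0) rather than a, so that scomp a is a ring
   morphism for every a; it is f o a as soon as a(0) = 0. *)
Definition scomp f : series :=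
  Series (fun m => \sum_(j < m.+1) scoef f j * scoef ((sX * sbehead a) ^+ j) m).

(* Up to degree m, composition agrees with Horner evaluation of the
   truncation of f, seen as a polynomial with constant-series coefficients;
   multiplicativity then follows from hornerM. *)
Definition spoly (M : nat) f : {poly series} := \poly_(j < M) scst (scoef f j).

Lemma horner_spoly M f m :
  (m < M)%N -> scoef (spoly M f).[sX * sbehead a] m = scoef (scomp f) m.
Proof.
move=> ltmM; rewrite horner_poly scoef_sum.
under eq_bigr do rewrite scoef_scstM.
rewrite -(subnKC ltmM) big_split_ord /= [X in _ + X]big1 ?addr0 // => i _.
by rewrite -[_ ^+ _]mulr1 scoef_XMexp_lt ?mulr0 // ltnS leq_addr.
Qed.

Lemma take_spolyM M f g : take_poly M (spoly M f * spoly M g) = spoly M (f * g).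
Proof.
apply/polyP => i; rewrite coef_take_poly coef_poly; case: ifP => ltiM //.
rewrite coefM scoefM rmorph_sum; apply: eq_bigr => -[k ltki] _ /=.
have ltkM : (k < M)%N by apply: leq_ltn_trans ltiM; rewrite -ltnS.
by rewrite !coef_poly rmorphM ltkM (leq_ltn_trans (leq_subr _ _) ltiM).
Qed.

Lemma scomp_is_zmod_morphism : zmod_morphism scomp.
Proof.
move=> f g; apply: series_ext => m; rewrite /= -sumrB.
by apply: eq_bigr => j _; rewrite mulrBl.
Qed.

Lemma scomp_is_monoid_morphism : monoid_morphism scomp.
Proof.
split.
  apply: series_ext => m; rewrite /= big_ord_recl mul1r expr0.
  by rewrite big1 ?addr0 // => j _; rewrite mul0r.
move=> f g; apply: series_ext => m; rewrite -(@horner_spoly m.+1) // -take_spolyM.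
set p := spoly m.+1 f * spoly m.+1 g; set x := sX * sbehead a.
have -> : (take_poly m.+1 p).[x] = p.[x] - x ^+ m.+1 * (drop_poly m.+1 p).[x].
  by rewrite -{2}(poly_take_drop m.+1 p) hornerD hornerM hornerXn mulrC addrK.
rewrite scoefB scoef_XMexp_lt // subr0 /p hornerM.
by apply: scoefM_eq => i le_im; rewrite horner_spoly.
Qed.

HB.instance Definition _ :=
  GRing.isZmodMorphism.Build series series scomp scomp_is_zmod_morphism.
HB.instance Definition _ :=
  GRing.isMonoidMorphism.Build series series scomp scomp_is_monoid_morphism.

Hypothesis a0 : scoef a 0 = 0.

Lemma scoef_scomp f m :
  scoef (scomp f) m = \sum_(j < m.+1) scoef f j * scoef (a ^+ j) m.
Proof. by rewrite /= sbeheadK. Qed.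

Lemma scompX : scomp sX = a.
Proof.
apply: series_ext => m; rewrite scoef_scomp.
case: m => [|m]; first by rewrite big_ord1 mul0r.
rewrite 2!big_ord_recl /= mul0r mul1r add0r expr1 big1 ?addr0 // => j _.
by rewrite /= mul0r.
Qed.

End Composition.

(* phi^m (1 - t phi' / phi) for phi(t) = (1 + t)^3: the Lagrange-Burmann
   kernel, written with sgeom (-1) = 1 / (1 + t). *)
Definition lagrange_kernel m : series :=
  (1 + sX) ^+ (3 * m) * (1 - 2%:R * sX) * sgeom (-1).

Lemma scoef_lagrange_kernel0 : scoef (lagrange_kernel 0) 0 = 1.
Proof.
by rewrite !scoefM0 muln0 expr0 scoefB scoef_natM /= mulr0 subr0 !mul1r.
Qed.

Lemma scoef_lagrange_kernel_diag m : scoef (lagrange_kernel m.+1) m.+1 = 0.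
Proof.
have -> : lagrange_kernel m.+1 =
    (1 + sX) ^+ (3 * m + 2) * (1 - 2%:R * sX) * ((1 + sX) * sgeom (-1)).
  rewrite /lagrange_kernel (_ : 3 * m.+1 = (3 * m + 2).+1)%N; last by lia.
  by rewrite exprS; ring.
rewrite sgeomN1K mulr1 mulrBr mulr1 mulrCA [_ * sX]mulrC scoefB scoef_natM scoefXM.
have binS_eq : 'C(3 * m + 2, m.+1) = 2 * 'C(3 * m + 2, m) :> nat.
  apply/eqP; rewrite -(eqn_pmul2l (ltn0Sn m)) mul_bin_left.
  by rewrite (_ : 3 * m + 2 - m = 2 * m.+1)%N; [rewrite mulnCA mulnA | lia].
by rewrite !scoef_binomial binS_eq natrM subrr.
Qed.

Section Lagrange.
Variable a : series.
Hypothesis a_eq : sX * (1 + a) ^+ 3 = a.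

Lemma scoef0_lagrange : scoef a 0 = 0.
Proof. by rewrite -a_eq scoefXM. Qed.

Lemma scoef_lagrange m j :
  scoef (a ^+ j) m = scoef (sX ^+ j * lagrange_kernel m) m.
Proof.
elim: m j => [|m IHm] [|j].
- by rewrite expr0 mul1r scoef_lagrange_kernel0.
- rewrite -(sbeheadK scoef0_lagrange) -[_ ^+ _]mulr1 scoef_XMexp_lt //.
  by rewrite scoefXnM.
- by rewrite expr0 mul1r scoef_lagrange_kernel_diag.
(* Both sides obey the recurrence coming from a = t (1 + a)^3. *)
have -> : a ^+ j.+1 = sX * (a ^+ j + 3%:R * a ^+ j.+1 + 3%:R * a ^+ j.+2 + a ^+ j.+3).
  by rewrite exprSr -{2}a_eq !exprS; ring.
have -> : sX ^+ j.+1 * lagrange_kernel m.+1 =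
    sX * (sX ^+ j * lagrange_kernel m + 3%:R * (sX ^+ j.+1 * lagrange_kernel m)
          + 3%:R * (sX ^+ j.+2 * lagrange_kernel m) + sX ^+ j.+3 * lagrange_kernel m).
  by rewrite /lagrange_kernel mulnS exprD !exprS; ring.
by rewrite !scoefXM !scoefD !scoef_natM !IHm.
Qed.

End Lagrange.

Lemma A1_scomp (a b : series) :
    sX * (1 + a) ^+ 3 = a -> b * (1 - 2%:R * a) ^+ 4 = - (a * (1 + a) ^+ 4) ->
  b = scomp a (- (sX * (1 + sX) ^+ 4 * sgeom 2 ^+ 4)).
Proof.
move=> a_eq b_eq; have a0 := scoef0_lagrange a_eq.
have reg_u : GRing.rreg ((1 - 2%:R * a) ^+ 4).
  apply: rreg_scoef0; rewrite scoefX0 scoefB scoef_natM a0 mulr0 subr0 /=.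
  by rewrite expr1n; apply: rreg1.
apply: reg_u => /=; rewrite b_eq.
have -> : (1 - 2%:R * a) ^+ 4 = scomp a ((1 - 2%:R * sX) ^+ 4).
  by rewrite rmorphXn rmorphB rmorph1 rmorphM rmorph_nat /= scompX.
rewrite -rmorphM.
have -> : - (sX * (1 + sX) ^+ 4 * sgeom 2 ^+ 4) * (1 - 2%:R * sX) ^+ 4 =
    - (sX * (1 + sX) ^+ 4) * ((1 - 2%:R * sX) * sgeom 2) ^+ 4 by ring.
by rewrite sgeom2K expr1n mulr1 rmorphN rmorphM rmorphXn rmorphD rmorph1 /= scompX.
Qed.

Lemma scoef_A1 (a b : series) :
    sX * (1 + a) ^+ 3 = a -> b * (1 - 2%:R * a) ^+ 4 = - (a * (1 + a) ^+ 4) ->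
  forall n, - scoef b n = scoef (sX * (1 + sX) ^+ (3 * n + 3) * sgeom 2 ^+ 3) n.
Proof.
move=> a_eq b_eq n; rewrite (A1_scomp a_eq b_eq) scoef_scomp ?scoef0_lagrange //.
set h := - (sX * (1 + sX) ^+ 4 * sgeom 2 ^+ 4).
rewrite (eq_bigr (fun j : 'I_n.+1 => scoef h j * scoef (lagrange_kernel n) (n - j)));
  last by move=> [j ltjn] _; rewrite /= scoef_lagrange // scoefXnM -ltnS ltjn.
rewrite -scoefM.
have -> : h * lagrange_kernel n = - (sX * (1 + sX) ^+ (3 * n + 3) * sgeom 2 ^+ 3).
  transitivity (- (sX * (1 + sX) ^+ (3 * n + 3) * sgeom 2 ^+ 3)
                * ((1 + sX) * sgeom (-1)) * ((1 - 2%:R * sX) * sgeom 2)).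
    by rewrite /h /lagrange_kernel exprD; ring.
  by rewrite sgeomN1K sgeom2K !mulr1.
by rewrite scoefN opprK.
Qed.

Lemma scoef_geom_binomial c N m :
  scoef (sgeom c * (1 + sX) ^+ N) m = \sum_(k < m.+1) c ^+ k * 'C(N, m - k)%:R.
Proof. by rewrite scoefM; apply: eq_bigr => k _; rewrite scoef_binomial. Qed.

Lemma scoef_X_binomial_geom3 n :
  18%:R * scoef (sX * (1 + sX) ^+ (3 * n + 3) * sgeom 2 ^+ 3) n =
  n.+1%:R * scoef (sgeom 2 * (1 + sX) ^+ (3 * n + 4)) n.+1
  - (4 * n + 6)%:R * 'C(3 * n + 3, n)%:R.
Proof.
set Z := (1 + sX) ^+ (3 * n + 3); set Y := (1 + sX) ^+ (3 * n + 4).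
set W := sgeom 2; set P : series := 1 - 3%:R * sX + 8%:R * sX ^+ 2.
have YZ : Y = (1 + sX) * Z by rewrite /Y /Z addnS exprS.
have dY : sderiv Y = (3 * n + 4)%:R * Z.
  by rewrite /Y addnS sderivXn raddfD /= sderiv1 sderivX add0r mulr1 -addnS.
have dP : sderiv P = - 3%:R + 16%:R * sX.
  rewrite !raddfD raddfN /= sderiv1 !sderivM !sderiv_nat sderivX; ring.
have dW2 : sderiv (W ^+ 2) = 4%:R * W ^+ 3.
  by rewrite sderivXn sderiv_geom rmorph_nat -/W; ring.
(* [t^(n+1)] (t G' - (n + 1) G) = 0 by scoef_euler; the identity below
   is checked after clearing the denominator (1 - 2t)^3. *)
pose G := Y * P * W ^+ 2.
have certificate : sX * sderiv G - n.+1%:R * G =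
    18%:R * (sX * (sX * Z * W ^+ 3)) - n.+1%:R * (W * Y) + (4 * n + 6)%:R * (sX * Z).
  apply/eqP; rewrite -subr_eq0; apply/eqP.
  rewrite (_ : _ - _ = - ((4 * n + 6)%:R * sX * Z) + (n.+1%:R * (1 + sX) * Z) * W
     + (Z * (sX * (3 * n + 4)%:R * P + sX * (1 + sX) * (- 3%:R + 16%:R * sX)
             - n.+1%:R * (1 + sX) * P)) * W ^+ 2
     + (Z * (4%:R * sX * (1 + sX) * P - 18%:R * sX ^+ 2)) * W ^+ 3); last first.
    by rewrite /G sderivM dW2 sderivM dY dP YZ; ring.
  by apply: (reciprocal_cubic sgeom2K); rewrite /P; ring.
have := congr1 (fun f => scoef f n.+1) certificate.
rewrite scoefB scoef_euler scoef_natM mulr_natl subrr scoefD scoefB !scoef_natM.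
rewrite !scoefXM /Z scoef_binomial => E.
by apply/eqP; rewrite -subr_eq0 E; apply/eqP; ring.
Qed.

End SeriesTheory.

Arguments sX {R}.

Lemma bin_ffact_shift m c k : (k <= m)%N ->
  ('C(m + c, m) * m ^_ k = 'C(m + c, m - k) * (c + k) ^_ k)%N.
Proof.
move=> le_km; apply/eqP; rewrite -(@eqn_pmul2r ((m - k)`! * c`!)) ?muln_gt0 ?fact_gt0 //.
have -> : ('C(m + c, m) * m ^_ k * ((m - k)`! * c`!) = 'C(m + c, m) * (m`! * c`!))%N.
  by rewrite -(ffact_fact le_km); ring.
have -> : ('C(m + c, m - k) * (c + k) ^_ k * ((m - k)`! * c`!)
          = 'C(m + c, m - k) * ((m - k)`! * (c + k)`!))%N.
  by rewrite -(ffact_fact (leq_addl c k)) addnK; ring.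
have le_mk_mc : (m - k <= m + c)%N by lia.
have := bin_fact le_mk_mc; rewrite (_ : m + c - (m - k) = c + k)%N; last by lia.
by move=> ->; rewrite -[in c`!](addKn m c) bin_fact ?leq_addr.
Qed.

Lemma poch0 x : poch x 0 = 1.
Proof. by rewrite /poch big_ord0. Qed.

Lemma pochS x k : poch x k.+1 = poch x k * (x + k%:R).
Proof. by rewrite /poch big_ord_recr. Qed.

Lemma poch1 k : poch 1 k = k`!%:R.
Proof.
by elim: k => [|k IHk]; rewrite ?poch0 // pochS IHk factS natrM -natr1; ring.
Qed.

Lemma poch_opp_nat m k : poch (- m%:R) k = (-1) ^+ k * (m ^_ k)%:R.
Proof.
elim: k => [|k IHk]; first by rewrite poch0 expr0 mulr1.
rewrite pochS IHk ffactnSr natrM exprS.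
have [le_km | lt_mk] := leqP k m; first by rewrite natrB //; ring.
by rewrite ffact_small //; ring.
Qed.

Lemma poch_nat m k : poch m.+1%:R k = ((m + k) ^_ k)%:R.
Proof.
elim: k => [|k IHk]; first by rewrite poch0.
by rewrite pochS IHk addnS ffactSS natrM mulrC -natrD addSn.
Qed.

Lemma bin_hyp2F1_1 m c z :
  'C(m + c, m)%:R * hyp2F1_term 1 m c.+1%:R z =
  \sum_(k < m.+1) (- z) ^+ k * 'C(m + c, m - k)%:R.
Proof.
rewrite /hyp2F1_term mulr_sumr; apply: eq_bigr => -[k /= le_km] _.
rewrite poch1 poch_opp_nat poch_nat.
have fk_neq0 : k`!%:R != 0 :> rat by rewrite pnatr_eq0 -lt0n fact_gt0.
have ff_neq0 : ((c + k) ^_ k)%:R != 0 :> rat.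
  by rewrite pnatr_eq0 -lt0n ffact_gt0 leq_addl.
have shift_eq : 'C(m + c, m)%:R * (m ^_ k)%:R =
    'C(m + c, m - k)%:R * ((c + k) ^_ k)%:R :> rat.
  by rewrite -!natrM bin_ffact_shift.
transitivity ('C(m + c, m)%:R * (m ^_ k)%:R * ((-1) ^+ k * z ^+ k) / ((c + k) ^_ k)%:R).
  by field; rewrite fk_neq0 ff_neq0.
by rewrite shift_eq mulrAC mulfK // [(- z) ^+ k]exprNn mulrC.
Qed.

Lemma scoef_A1_hyp2F1 (a b : series rat) :
    sX * (1 + a) ^+ 3 = a -> b * (1 - 2%:R * a) ^+ 4 = - (a * (1 + a) ^+ 4) ->
  forall n, - scoef b n = n.+1%:R / 18 * 'C(3 * n + 4, n.+1)%:R *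
    (hyp2F1_term 1 n.+1 (2 * n + 4)%:R (-2) - (4 * n + 6)%:R / (3 * n + 4)%:R).
Proof.
move=> a_eq b_eq n.
have key := scoef_X_binomial_geom3 rat n.
rewrite -(scoef_A1 a_eq b_eq) scoef_geom_binomial in key.
have := bin_hyp2F1_1 n.+1 (2 * n + 3) (-2).
rewrite opprK (_ : n.+1 + (2 * n + 3) = 3 * n + 4)%N; last by lia.
rewrite (_ : (2 * n + 3).+1 = 2 * n + 4)%N => [hyp|]; last by lia.
have n34 : (3 * n + 4)%:R != 0 :> rat by rewrite pnatr_eq0 addn4.
have bin_diag : 'C(3 * n + 3, n)%:R =
    n.+1%:R * 'C(3 * n + 4, n.+1)%:R / (3 * n + 4)%:R :> rat.
  have : (3 * n + 4)%:R * 'C(3 * n + 3, n)%:R =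
      n.+1%:R * 'C(3 * n + 4, n.+1)%:R :> rat by rewrite -!natrM -mul_bin_diag addnS.
  by move <-; rewrite mulrC mulKf.
apply: (@mulfI _ 18%:R) => //.
rewrite [LHS]key -hyp bin_diag; field.
by rewrite -natrM -natrD pnatr_eq0 addn4.
Qed.

Lemma fexpE (g : fps) k m : fexp g k m = scoef (Series g ^+ k) m.
Proof.
elim: k m => [|k IHk] m; first by rewrite expr0.
rewrite exprS scoefM -[LHS]/(fmul g (fexp g k) m).
by apply: eq_bigr => i _; rewrite IHk.
Qed.

Lemma fmul_fexpE (f g : fps) k n :
  fmul f (fexp g k) n = scoef (Series f * Series g ^+ k) n.
Proof. by rewrite scoefM; apply: eq_bigr => i _; rewrite fexpE. Qed.

Theorem proposition6 (a b : fps) :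
  a 0%N = 0 ->
  (forall n, fmul fX (fexp (fun k => fone k + a k) 3) n = a n) ->
  (forall n, fmul b (fexp (fun k => fone k - 2 * a k) 4) n
             = - fmul a (fexp (fun k => fone k + a k) 4) n) ->
  forall n : nat, (1 <= n)%N ->
    - b n = (n.+1)%:R / 18 * ('C(3 * n + 4, n.+1))%:R *
            (hyp2F1_term 1 n.+1 (2 * n + 4)%:R (-2)
             - (4 * n + 6)%:R / (3 * n + 4)%:R).
Proof.
(* a 0 = 0 follows from the fixed-point equation, and the formula also
   holds for n = 0. *)
move=> _ a_eq b_eq n _.
pose A := Series a; pose B := Series b.
have oneA : Series (fun k => fone k + a k) = 1 + A by apply: series_ext.
have one2A : Series (fun k => fone k - 2 * a k) = 1 - 2%:R * A.
  by apply: series_ext => k; rewrite scoefB scoef_natM.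
apply: (@scoef_A1_hyp2F1 A B).
  by apply: series_ext => k; rewrite -oneA -[RHS]a_eq fmul_fexpE.
by apply: series_ext => k; rewrite -oneA -one2A scoefN -!fmul_fexpE b_eq.
Qed.
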